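(* Let $F|R$ be an extension of ordered fields with canonical valuation $v$ and assume that $vR$ is not a convex subgroup of $vF$. Then there is no injective map $\tilde\iota:\mathcal C(R)\to\mathcal C(F)$ that is continuous with respect to the full topologies and compatible with restriction.
   Context: The canonical valuation $v$ of an ordered field has as valuation ring the convex hull of $\mathbb Z$. For an ordered field $K$, a cut is a pair $(D,E)$ with $D<E$, $D\cup E=K$; $\mathcal C(K)$ is the set of cuts, ordered by $(D_1,E_1)<(D_2,E_2)$ iff $D_1\subsetneq D_2$. For nonempty $A\subseteq K$, $A^+=(D,K\setminus D)$ with $D$ the smallest initial segment containing $A$, and $A^-=(K\setminus E,E)$ with $E$ the smallest final segment containing $A$. For $a\in K$ and a final segment $S$ of $vK$ (possibly empty), $B_S(a,K)=\{b\in K\mid v(a-b)\in S\cup\{\infty\}\}$ is a ball. Two cuts are equivalent if they are equal or are $B^-$ and $B^+$ for the same ball $B$; a subset of $\mathcal C(K)$ is full if closed under equivalence. The interval topology on $\mathcal C(K)$ has basic open sets $(C_1,C_2)$, $(C_1,(K,\emptyset)]$, $[(\emptyset,K),C_2)$; the full topology consists of all full sets open in the interval topology. Restriction of a cut $(D',E')$ of $F$ to $R$ is $(D'\cap R,E'\cap R)$; $\tilde\iota$ is compatible with restriction if the restriction of $\tilde\iota(C)$ is $C$ for all $C$. *)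

From HB Require Import structures.
From mathcomp Require Import all_boot all_order all_algebra.
Set Implicit Arguments. Unset Strict Implicit. Unset Printing Implicit Defensive.
Import Order.TTheory GRing.Theory Num.Theory.
Local Open Scope ring_scope.

Section Defs.
Variable K : realFieldType.

(* Canonical valuation (valuation ring = convex hull of Z):
   [vle x y] means v(x) <= v(y), i.e. y/x lies in the convex hull of Z
   (with v(0) = oo). *)
Definition vle (x y : K) : Prop := exists n : nat, `|y| <= n%:R * `|x|.

(* Cuts (D,E) are represented by their lower part D, an initial segment;
   E is its complement. *)
Definition initial (D : K -> Prop) : Prop := forall x y, y <= x -> D x -> D y.

Record cut := Cut { cutD : K -> Prop; cutP : initial cutD }.

Definition cut_lt (C1 C2 : cut) : Prop :=
  (forall x, cutD C1 x -> cutD C2 x) /\ exists x, cutD C2 x /\ ~ cutD C1 x.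
Definition cut_le (C1 C2 : cut) : Prop := C1 = C2 \/ cut_lt C1 C2.

Lemma initial_top : initial (fun _ => True). Proof. by []. Qed.
Lemma initial_bot : initial (fun _ => False). Proof. by []. Qed.
Definition cut_top : cut := Cut initial_top.
Definition cut_bot : cut := Cut initial_bot.

Definition plusD (A : K -> Prop) : K -> Prop := fun x => exists2 a, A a & x <= a.
Lemma plusD_initial A : initial (plusD A).
Proof. by move=> x y yx [a Aa xa]; exists a => //; exact: le_trans yx xa. Qed.
Definition cut_plus (A : K -> Prop) : cut := Cut (@plusD_initial A).

(* A^- : E = smallest final segment containing A, D = K \ E *)
Definition minusD (A : K -> Prop) : K -> Prop :=
  fun x => ~ exists2 a, A a & a <= x.
Lemma minusD_initial A : initial (minusD A).
Proof. by move=> x y yx H [a Aa ay]; apply: H; exists a => //; exact: le_trans ay yx. Qed.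
Definition cut_minus (A : K -> Prop) : cut := Cut (@minusD_initial A).

(* Final segments S of the value group vK (possibly empty), represented by
   the set of nonzero elements whose value lies in S. *)
Definition value_final_segment (S : K -> Prop) : Prop :=
  (forall x, S x -> x != 0) /\
  (forall x y, S x -> y != 0 -> vle x y -> S y).

(* B_S(a,K) = { b | v(a-b) \in S \cup {oo} } *)
Definition ball_of (a : K) (S : K -> Prop) : K -> Prop :=
  fun b => a - b = 0 \/ S (a - b).

Definition is_ball (B : K -> Prop) : Prop :=
  exists a S, value_final_segment S /\ forall b, B b <-> ball_of a S b.

Definition cut_equiv (C1 C2 : cut) : Prop :=
  C1 = C2 \/
  exists B, is_ball B /\
    ((C1 = cut_minus B /\ C2 = cut_plus B) \/ (C1 = cut_plus B /\ C2 = cut_minus B)).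

Definition full (U : cut -> Prop) : Prop :=
  forall C1 C2, cut_equiv C1 C2 -> U C1 -> U C2.

Definition interval_basic (N : cut -> Prop) : Prop :=
  exists C1 C2,
    (forall C, N C <-> cut_lt C1 C /\ cut_lt C C2) \/
    (forall C, N C <-> cut_lt C1 C /\ cut_le C cut_top) \/
    (forall C, N C <-> cut_le cut_bot C /\ cut_lt C C2).

Definition interval_open (U : cut -> Prop) : Prop :=
  forall C, U C -> exists N, interval_basic N /\ N C /\ (forall C', N C' -> U C').

Definition full_open (U : cut -> Prop) : Prop := full U /\ interval_open U.

End Defs.

Arguments cut K : clear implicits.

Definition full_continuous (R F : realFieldType) (g : cut R -> cut F) : Prop :=
  forall U : cut F -> Prop, full_open U -> full_open (fun C => U (g C)).

(* the restriction (D' \cap R, E' \cap R) of iota C to R (via the embedding f)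
   equals C *)
Definition compatible_restriction (R F : realFieldType) (f : R -> F)
  (iota : cut R -> cut F) : Prop :=
  forall (C : cut R) (x : R), cutD (iota C) (f x) <-> cutD C x.

(* vR is a convex subset of vF (vR = image of R^x under the canonical
   valuation of F, which restricts to the canonical valuation of R). *)
Definition value_group_convex (R F : realFieldType) (f : R -> F) : Prop :=
  forall x : F, x != 0 -> forall r1 r2 : R, r1 != 0 -> r2 != 0 ->
    vle (f r1) x -> vle x (f r2) ->
    exists r : R, r != 0 /\ vle x (f r) /\ vle (f r) x.

From HB Require Import structures.
From mathcomp Require Import all_boot all_order all_algebra.
From mathcomp Require Import ring lra.
From Stdlib Require Import Classical.
Import Order.TTheory GRing.Theory Num.Theory.
Set Implicit Arguments. Unset Strict Implicit. Unset Printing Implicit Defensive.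
Local Open Scope ring_scope.

(* Choose x in F whose value lies between two values of R without being one,
   and let B = {r | v(f r) >= v(x)}, a convex subgroup and hence a ball of R,
   so that B^+ and B^- are equivalent cuts.  Look at whether |x| lies in the
   lower part of iota(B^+).  If not, iota(B^+) separates two points of
   {y | v(y) >= v(x)}; this property is full and open, so by continuity it
   holds for iota(B^-) and then for iota((-oo, t]) with t just below B, which
   drags t/2 into B.  If so, iota(B^+) separates the endpoints of an interval
   missing the convex hull of f(B); by continuity so does iota((-oo, b]) for
   some b in B, although that cut separates f b from f (b + |r2|), both in
   the hull. *)

Section ConvexSubgroups.
Variable K : realFieldType.
Implicit Types (G : K -> Prop) (p q w x y z : K).

Definition convex_subgroup G :=
  [/\ G 0, forall z w, G z -> `|w| <= `|z| -> G w
         & forall z w, G z -> G w -> G (z + w)].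

Lemma convex_subgroupN G z : convex_subgroup G -> G z -> G (- z).
Proof. by case=> _ Gnorm _ Gz; apply: Gnorm Gz _; rewrite normrN. Qed.

Lemma convex_subgroupB G z w : convex_subgroup G -> G z -> G w -> G (z - w).
Proof.
by move=> GG Gz Gw; have [_ _ GD] := GG; apply: GD => //; apply: convex_subgroupN.
Qed.

Lemma convex_subgroupMn G z n : convex_subgroup G -> G z -> G (z *+ n).
Proof.
by case=> G0 _ GD Gz; elim: n => [|n IHn]; rewrite ?mulr0n ?mulrS //; apply: GD.
Qed.

Lemma convex_subgroup_between G p w q :
  convex_subgroup G -> G p -> G q -> p <= w <= q -> G w.
Proof.
case=> _ Gnorm _ Gp Gq /andP[pw wq]; have [w_ge0|w_lt0] := lerP 0 w.
- by apply: Gnorm Gq _; rewrite (ger0_norm w_ge0) (le_trans wq) ?ler_norm.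
- apply: Gnorm Gp _; rewrite (ltr0_norm w_lt0) -normrN.
  by rewrite (le_trans _ (ler_norm _)) ?lerN2.
Qed.

Lemma convex_subgroup_norm_lt G w y :
  convex_subgroup G -> ~ G w -> G y -> `|y| *+ 2 < `|w|.
Proof.
move=> GG nGw Gy; rewrite ltNge; apply/negP => le_w; apply: nGw.
by have [_ Gnorm _] := GG; apply: Gnorm (convex_subgroupMn 2 GG Gy) _; rewrite normrMn.
Qed.

Lemma convex_subgroup_far G w z :
  convex_subgroup G -> ~ G w -> `|z - w| *+ 2 <= `|w| -> ~ G z.
Proof.
move=> GG nGw near Gz; have := convex_subgroup_norm_lt GG nGw Gz.
have := lerB_dist w z; rewrite distrC in near; lra.
Qed.

Lemma convex_subgroup_ball G : convex_subgroup G -> is_ball G.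
Proof.
move=> GG; have [G0 Gnorm _] := GG.
exists 0, (fun r => r != 0 /\ G r); split.
- split=> [r [] //|r s [_ Gr] s_neq0 [n le_s]]; split=> //.
  by apply: Gnorm (convex_subgroupMn n GG Gr) _; rewrite normrMn -mulr_natl.
- move=> b; rewrite /ball_of sub0r; split=> [Gb|].
  + have [->|b_neq0] := eqVneq b 0; first by left; rewrite oppr0.
    by right; rewrite oppr_eq0; split=> //; apply: convex_subgroupN.
  + case=> [/eqP|[_ /(convex_subgroupN GG)]]; last by rewrite opprK.
    by rewrite oppr_eq0 => /eqP ->.
Qed.

Lemma vle_convex_subgroup x : convex_subgroup (vle x).
Proof.
split=> [|z w [n le_z] le_w|z w [n le_z] [m le_w]].
- by exists 0%N; rewrite normr0 mul0r.
- by exists n; apply: le_trans le_w le_z.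
- by exists (n + m)%N; rewrite natrD mulrDl (le_trans (ler_normD _ _)) ?lerD.
Qed.

End ConvexSubgroups.

Section Cuts.
Variable K : realFieldType.
Implicit Types (A G : K -> Prop) (C : cut K) (a b p q s t w z : K).

Lemma cut_mem_lt C p q : cutD C p -> ~ cutD C q -> p < q.
Proof. by move=> Cp nCq; rewrite ltNge; apply/negP => qp; apply: nCq (cutP qp Cp). Qed.

Lemma minusDP A t : minusD A t <-> forall a, A a -> t < a.
Proof.
split=> [nA a Aa|lt [a Aa]]; last by rewrite leNgt lt.
by rewrite ltNge; apply/negP => at_; apply: nA; exists a.
Qed.

Lemma not_plusDP A t : ~ plusD A t <-> forall a, A a -> a < t.
Proof.
split=> [nA a Aa|lt [a Aa]]; last by rewrite leNgt lt.
by rewrite ltNge; apply/negP => ta; apply: nA; exists a.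
Qed.

Definition cut_at t : cut K := cut_plus (fun y => y = t).

Lemma cut_atE t z : cutD (cut_at t) z <-> z <= t.
Proof. by split=> [[_ ->]|]; last exists t. Qed.

Lemma cut_lt_trans C1 C2 C3 : cut_lt C1 C2 -> cut_lt C2 C3 -> cut_lt C1 C3.
Proof.
move=> [sub12 [x [C2x nC1x]]] [sub23 _].
by split=> [z /sub12 /sub23 //|]; exists x; split=> //; apply: sub23.
Qed.

Lemma cut_lt_at C t : ~ cutD C t -> cut_lt C (cut_at t).
Proof.
move=> nCt; split=> [z Cz|]; last by exists t; split=> //; apply/cut_atE.
by apply/cut_atE/ltW; apply: cut_mem_lt nCt.
Qed.

Lemma cut_at_lt_top t : cut_lt (cut_at t) (cut_top K).
Proof. by split=> //; exists (t + 1); split=> // /cut_atE; lra. Qed.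

Lemma cut_bot_lt_at t : cut_lt (cut_bot K) (cut_at t).
Proof. by split=> //; exists t; split=> //; apply/cut_atE. Qed.

Lemma minusD_lt0 G t : convex_subgroup G -> minusD G t -> t < 0.
Proof. by case=> G0 _ _ /minusDP; apply. Qed.

Lemma minusD_half G t : convex_subgroup G -> minusD G t -> minusD G (t / 2).
Proof.
move=> GG /minusDP Gt; apply/minusDP => a Ga.
by have [_ _ GD] := GG; have := Gt _ (GD _ _ Ga Ga); lra.
Qed.

Lemma minusD_normN G w : convex_subgroup G -> ~ G w -> minusD G (- `|w|).
Proof.
move=> [_ Gnorm _] nGw; apply/minusDP => a Ga; rewrite ltNge; apply/negP => a_le.
by apply: nGw (Gnorm _ _ Ga _); have := ler_norm (- a); rewrite normrN; lra.
Qed.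

Lemma cut_at_lt_minus G t :
  convex_subgroup G -> minusD G t -> cut_lt (cut_at t) (cut_minus G).
Proof.
move=> GG Gt; split=> [z /cut_atE zt|]; first exact: minusD_initial zt Gt.
exists (t / 2); split; first exact: minusD_half.
by have := minusD_lt0 GG Gt; move=> t_lt0 /cut_atE; lra.
Qed.

Lemma cut_at_lt_plus G b e :
  convex_subgroup G -> G b -> G e -> e != 0 -> cut_lt (cut_at b) (cut_plus G).
Proof.
move=> [_ Gnorm GD] Gb Ge e_neq0; split=> [z /cut_atE zb|]; first by exists b.
exists (b + `|e|); split.
- by exists (b + `|e|) => //; apply: GD Gb (Gnorm _ _ Ge _); rewrite normr_id.
- by have := normr_gt0 e; rewrite e_neq0 => e_gt0 /cut_atE; lra.
Qed.

Lemma interval_basic_cut_at N C (T : K -> Prop) :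
  interval_basic N -> N C -> (exists t, T t) ->
  (forall s, cutD C s -> exists2 t, T t & s <= t) ->
  (forall t, T t -> cut_lt (cut_at t) C) ->
  exists2 t, T t & N (cut_at t).
Proof.
move=> [C1 [C2 NE]] NC [t0 Tt0] cofinal below.
have above_C1 : cut_lt C1 C -> exists2 t, T t & cut_lt C1 (cut_at t).
  move=> [_ [s [Cs nC1s]]]; have [t Tt st] := cofinal s Cs.
  by exists t => //; apply: cut_lt_at => C1t; apply: nC1s (cutP st C1t).
case: NE => [|[|]] NE; move/NE: NC => [lo hi].
- have [t Tt C1t] := above_C1 lo; exists t => //.
  by apply/NE; split=> //; apply: cut_lt_trans (below _ Tt) hi.
- have [t Tt C1t] := above_C1 lo; exists t => //.
  by apply/NE; split=> //; right; apply: cut_at_lt_top.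
- exists t0 => //; apply/NE; split; first by right; apply: cut_bot_lt_at.
  exact: cut_lt_trans (below _ Tt0) hi.
Qed.

End Cuts.

Section Straddling.
Variable K : realFieldType.
Implicit Types (G W Y : K -> Prop) (C : cut K) (a b c p q w z : K).

Definition straddles (Phi : K -> K -> Prop) C :=
  exists p q, [/\ cutD C p, ~ cutD C q & Phi p q].

Definition straddles_in G := straddles (fun p q => G p /\ G q).

Definition straddles_off G := straddles (fun p q => forall z, p <= z <= q -> ~ G z).

Lemma straddles_open (Phi : K -> K -> Prop) :
  (forall p q q', Phi p q -> p <= q' <= q -> Phi p q') -> interval_open (straddles Phi).
Proof.
move=> Phi_shrink C [p [q [Cp nCq Phi_pq]]].
exists (fun C' => cut_lt (cut_minus (eq^~ p)) C' /\ cut_lt C' (cut_at q)); split.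
  by exists (cut_minus (eq^~ p)), (cut_at q); left.
split.
- split; last exact: cut_lt_at.
  split=> [z /minusDP z_lt|]; first exact: cutP (ltW (z_lt p erefl)) Cp.
  by exists p; split=> // /minusDP /(_ p erefl); rewrite ltxx.
- move=> C' [[_ [z [C'z z_ge]]] [_ [w [/cut_atE wq nC'w]]]].
  have C'p : cutD C' p.
    by apply: cutP C'z; rewrite leNgt; apply/negP => zp; apply/z_ge/minusDP => _ ->.
  exists p, w; split=> //; apply: Phi_shrink Phi_pq _.
  by rewrite wq andbT ltW // (cut_mem_lt C'p nC'w).
Qed.

Lemma full_of_balls (U : cut K -> Prop) :
  (forall W, is_ball W -> U (cut_minus W) -> U (cut_plus W)) ->
  (forall W, is_ball W -> U (cut_plus W) -> U (cut_minus W)) -> full U.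
Proof.
by move=> mp pm C1 C2 [<- //|[W [bW [[-> ->]|[-> ->]]]]]; [apply: mp | apply: pm].
Qed.

Lemma value_final_segment_convex (S : K -> Prop) :
  value_final_segment S -> convex_subgroup (fun z => z = 0 \/ S z).
Proof.
move=> [_ S_up]; split=> [|z w|z w]; first by left.
- case=> [->|Sz] le_w; first by left; apply/eqP; rewrite -normr_le0 -(normr0 K).
  have [->|w_neq0] := eqVneq w 0; [by left | right].
  by apply: S_up Sz w_neq0 _; exists 1%N; rewrite mul1r.
- wlog le_wz : z w / `|w| <= `|z|.
    move=> hyp Iz Iw; have [le|lt] := lerP `|w| `|z|; first exact: hyp.
    by rewrite addrC; apply: hyp => //; apply: ltW.
  case=> [z0|Sz] Iw.
    by move: le_wz; rewrite z0 normr0 normr_le0 add0r => /eqP ->; left.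
  have [->|zw_neq0] := eqVneq (z + w) 0; [by left | right].
  by apply: S_up Sz zw_neq0 _; exists 2%N; have := ler_normD z w; lra.
Qed.

Lemma ball_coset W w : is_ball W -> W w ->
  exists2 I, convex_subgroup I & forall b, W b <-> I (w - b).
Proof.
move=> [a [S [VS W_ball]]] Ww; have II := value_final_segment_convex VS.
exists (fun z => z = 0 \/ S z) => // b; rewrite W_ball /ball_of.
have /W_ball Iaw : W w := Ww.
have [_ _ ID] := II; split=> Ib.
- have -> : w - b = (a - b) - (a - w) by ring.
  exact: (convex_subgroupB II).
- have -> : a - b = (w - b) + (a - w) by ring.
  exact: ID.
Qed.

Lemma ball_reflect W a c : is_ball W -> W a -> W c -> W (a + (a - c)).
Proof.
move=> bW Wa Wc; have [I II W_I] := ball_coset bW Wa.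
move/W_I: Wc => /(convex_subgroupN II) Iac.
by apply/W_I; have -> : a - (a + (a - c)) = - (a - c) by ring.
Qed.

Lemma ball_near W w c : is_ball W -> W w -> ~ W 0 -> W c -> `|w - c| *+ 2 < `|w|.
Proof.
move=> bW Ww nW0 Wc; have [I II W_I] := ball_coset bW Ww.
by apply: convex_subgroup_norm_lt II _ (proj1 (W_I c) Wc); rewrite -[w]subr0 -W_I.
Qed.

Lemma straddles_in_plus G W : convex_subgroup G -> is_ball W ->
  straddles_in G (cut_minus W) -> straddles_in G (cut_plus W).
Proof.
move=> GG bW [p [q [/minusDP p_lt nDq [Gp Gq]]]].
have [w Ww wq] : exists2 w, W w & w <= q := NNPP _ nDq.
have Gw : G w by apply: convex_subgroup_between GG Gp Gq _; rewrite wq ltW ?p_lt.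
have [_ _ GD] := GG.
exists w, (w + (w - p)); split; first by exists w.
- move=> [c Wc le_c]; have := p_lt _ (ball_reflect bW Ww Wc); lra.
- by split=> //; apply: GD => //; apply: convex_subgroupB.
Qed.

Lemma straddles_in_minus G W : convex_subgroup G -> is_ball W ->
  straddles_in G (cut_plus W) -> straddles_in G (cut_minus W).
Proof.
move=> GG bW [p [q [[w Ww pw] /not_plusDP lt_q [Gp Gq]]]].
have Gw : G w by apply: convex_subgroup_between GG Gp Gq _; rewrite pw ltW ?lt_q.
exists (w - (q - w)), w; split.
- apply/minusDP => c Wc; have := lt_q _ (ball_reflect bW Ww Wc); lra.
- by apply; exists w.
- by split=> //; apply: (convex_subgroupB GG) => //; apply: (convex_subgroupB GG).
Qed.

Lemma straddles_off_plus Y W : convex_subgroup Y -> is_ball W ->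
  straddles_off Y (cut_minus W) -> straddles_off Y (cut_plus W).
Proof.
move=> YY bW [p [q [/minusDP p_lt nDq offY]]].
have [w Ww wq] : exists2 w, W w & w <= q := NNPP _ nDq.
have pw := p_lt _ Ww.
have [W0|nW0] := classic (W 0).
- have W_opp c : W c -> W (- c) by move/(ball_reflect bW W0); rewrite add0r sub0r.
  exists (- w), (- p); split; first by exists (- w); first exact: W_opp.
  + by move=> [c /W_opp /p_lt]; lra.
  + move=> z /andP[wz zp] /(convex_subgroupN YY); apply: offY.
    by apply/andP; split; lra.
- exists w, (w + `|w| / 2); split; first by exists w.
  + move=> [c /(ball_near bW Ww nW0)]; have := ler_norm (c - w); rewrite distrC; lra.
  + move=> z /andP[wz zw]; apply: convex_subgroup_far YY (offY w _) _.
      by rewrite (ltW pw) wq.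
    by rewrite ger0_norm ?subr_ge0 //; lra.
Qed.

Lemma straddles_off_minus Y W : convex_subgroup Y -> is_ball W ->
  straddles_off Y (cut_plus W) -> straddles_off Y (cut_minus W).
Proof.
move=> YY bW [p [q [[w Ww pw] /not_plusDP lt_q offY]]].
have wq := lt_q _ Ww.
have [W0|nW0] := classic (W 0).
- have W_opp c : W c -> W (- c) by move/(ball_reflect bW W0); rewrite add0r sub0r.
  exists (- q), (- w); split.
  + by apply/minusDP => c /W_opp /lt_q; lra.
  + by apply; exists (- w); first exact: W_opp.
  + move=> z /andP[qz zw] /(convex_subgroupN YY); apply: offY.
    by apply/andP; split; lra.
- exists (w - `|w| / 2), w; split; last first.
  + move=> z /andP[wz zw]; apply: convex_subgroup_far YY (offY w _) _.
      by rewrite pw ltW.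
    by rewrite ler0_norm ?subr_le0 //; lra.
  + by apply; exists w.
  + apply/minusDP => c /(ball_near bW Ww nW0); have := ler_norm (w - c); lra.
Qed.

Lemma full_open_straddles_in G : convex_subgroup G -> full_open (straddles_in G).
Proof.
move=> GG; split.
  by apply: full_of_balls => W bW; [apply: straddles_in_plus | apply: straddles_in_minus].
apply: straddles_open => p q q' [Gp Gq] /andP[pq' q'q]; split=> //.
by apply: convex_subgroup_between GG Gp Gq _; rewrite pq'.
Qed.

Lemma full_open_straddles_off Y : convex_subgroup Y -> full_open (straddles_off Y).
Proof.
move=> YY; split.
  by apply: full_of_balls => W bW; [apply: straddles_off_plus | apply: straddles_off_minus].
apply: straddles_open => p q q' off /andP[_ q'q] z /andP[pz zq'].
by apply: off; rewrite pz (le_trans zq').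
Qed.

Lemma not_straddles_off_sep Y C a c : convex_subgroup Y -> Y a -> Y c ->
  cutD C a -> ~ cutD C c -> ~ straddles_off Y C.
Proof.
move=> YY Ya Yc Ca nCc [p [q [Cp nCq offY]]].
have aq := cut_mem_lt Ca nCq; have pc := cut_mem_lt Cp nCc.
have [pa|ap] := lerP p a; first by apply: offY Ya; rewrite pa ltW.
apply: (offY p); first by rewrite lexx (ltW (cut_mem_lt Cp nCq)).
by apply: convex_subgroup_between YY Ya Yc _; rewrite !ltW.
Qed.

End Straddling.

Section Restriction.
Variables (R F : realFieldType) (f : {rmorphism R -> F}).
Hypothesis f_mono : {mono f : x y / x <= y}.

Lemma rmorph_norm z : `|f z| = f `|z|.
Proof.
have [z_ge0|z_lt0] := lerP 0 z.
- by rewrite !ger0_norm // -(rmorph0 f) f_mono.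
- by rewrite !ltr0_norm ?rmorphN // -(rmorph0 f) (leW_mono f_mono).
Qed.

Lemma convex_subgroup_preimage (G : F -> Prop) :
  convex_subgroup G -> convex_subgroup (fun r => G (f r)).
Proof.
move=> [G0 Gnorm GD]; split=> [|z w Gz le_w|z w Gz Gw]; first by rewrite rmorph0.
- by apply: Gnorm Gz _; rewrite !rmorph_norm f_mono.
- by rewrite rmorphD; apply: GD.
Qed.

Lemma convex_subgroup_hull (G : R -> Prop) :
  convex_subgroup G -> convex_subgroup (fun y => exists2 b, G b & `|y| <= `|f b|).
Proof.
move=> [G0 Gnorm GD]; split=> [|z w [b Gb le_z] le_w|z w [b Gb le_z] [c Gc le_w]].
- by exists 0; rewrite ?rmorph0.
- by exists b => //; apply: le_trans le_w le_z.
- exists (`|b| + `|c|).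
    by apply: GD; [apply: Gnorm Gb _ | apply: Gnorm Gc _]; rewrite normr_id.
  rewrite rmorph_norm (ger0_norm (addr_ge0 (normr_ge0 b) (normr_ge0 c))).
  rewrite rmorphD -!rmorph_norm.
  by rewrite (le_trans (ler_normD _ _)) ?lerD.
Qed.

Variables (x : F) (r1 r2 : R).
Hypotheses (x_neq0 : x != 0) (r1_neq0 : r1 != 0) (r2_neq0 : r2 != 0)
  (vle_r1x : vle (f r1) x) (vle_xr2 : vle x (f r2))
  (no_value : forall r, r != 0 -> vle x (f r) -> ~ vle (f r) x).
Variable iota : cut R -> cut F.
Hypotheses (iota_cont : full_continuous iota)
  (iota_restr : compatible_restriction f iota).

Let B (r : R) := vle x (f r).
Let Y (y : F) := exists2 b, B b & `|y| <= `|f b|.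

Let B_convex : convex_subgroup B.
Proof. exact: convex_subgroup_preimage (vle_convex_subgroup x). Qed.

Let Y_convex : convex_subgroup Y.
Proof. exact: convex_subgroup_hull B_convex. Qed.

Let notB_r1 : ~ B r1.
Proof. by move=> Br1; apply: (no_value r1_neq0 Br1). Qed.

Let B_norm_lt b : B b -> `|f b| < `|x|.
Proof.
move=> Bb; rewrite ltNge; apply/negP => le_x.
have [b0|b_neq0] := eqVneq b 0.
  by move: le_x x_neq0; rewrite b0 rmorph0 normr0 normr_le0 => ->.
by apply: (no_value b_neq0 Bb); exists 1%N; rewrite mul1r.
Qed.

Lemma not_straddles_in : ~ straddles_in (vle x) (iota (cut_plus B)).
Proof.
move=> in_plus.
have [V_full V_open] := iota_cont (full_open_straddles_in (vle_convex_subgroup x)).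
have B_equiv : cut_equiv (cut_plus B) (cut_minus B).
  by right; exists B; split; [apply: convex_subgroup_ball | right].
have [N [basicN [NB NV]]] := V_open _ (V_full _ _ B_equiv in_plus).
have [t Bt Nt] : exists2 t, minusD B t & N (cut_at t).
  apply: interval_basic_cut_at basicN NB _ _ (fun t => cut_at_lt_minus B_convex).
  - by exists (- `|r1|); apply: minusD_normN.
  - by move=> s Bs; exists s.
have [p [q [Cp _ [xp _]]]] := NV _ Nt.
have t_lt0 := minusD_lt0 B_convex Bt.
(* f (t / 2) lies strictly between p and 0, so t / 2 would be in B *)
have p_lt : p < f (t / 2).
  by apply: cut_mem_lt Cp _; move/iota_restr/cut_atE; lra.
have ft_lt0 : f (t / 2) < 0 by rewrite -(rmorph0 f) (leW_mono f_mono); lra.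
have B_half : B (t / 2).
  have [X0 _ _] := vle_convex_subgroup x.
  by apply: convex_subgroup_between (vle_convex_subgroup x) xp X0 _; rewrite !ltW.
by have /minusDP/(_ _ B_half) := minusD_half B_convex Bt; rewrite ltxx.
Qed.

Lemma not_straddles_off : ~ straddles_off Y (iota (cut_plus B)).
Proof.
move=> off_plus.
have [_ V_open] := iota_cont (full_open_straddles_off Y_convex).
have [N [basicN [NB NV]]] := V_open _ off_plus.
have [B0 Bnorm BD] := B_convex.
have [b Bb Nb] : exists2 b, B b & N (cut_at b).
  apply: interval_basic_cut_at basicN NB _ _ _; first by exists 0.
  - by move=> s Bs.
  - by move=> b Bb; apply: cut_at_lt_plus B_convex Bb vle_xr2 r2_neq0.
have B_r2 : B `|r2| by apply: Bnorm vle_xr2 _; rewrite normr_id.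
apply: not_straddles_off_sep Y_convex _ _ _ _ (NV _ Nb).
- by exists b.
- by exists (b + `|r2|) => //; apply: BD.
- by apply/iota_restr/cut_atE.
- move/iota_restr/cut_atE; have := normr_gt0 r2; rewrite r2_neq0; lra.
Qed.

Lemma continuous_compatible_absurd : False.
Proof.
have [B0 Bnorm _] := B_convex.
have [Cx|nCx] := classic (cutD (iota (cut_plus B)) `|x|).
- apply: not_straddles_off; exists `|x|, (f `|r1|); split=> //.
  + move/iota_restr => -[b Bb r1b]; apply: notB_r1; apply: Bnorm Bb _.
    exact: le_trans r1b (ler_norm b).
  + move=> z /andP[xz _] [b /B_norm_lt]; have := ler_norm z; lra.
- apply: not_straddles_in; exists 0, `|x|; split=> //.
  + by rewrite -(rmorph0 f); apply/iota_restr; exists 0.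
  + by split; [case: (vle_convex_subgroup x) | exists 1%N; rewrite normr_id mul1r].
Qed.

End Restriction.

Theorem proposition4p9 (R F : realFieldType) (f : {rmorphism R -> F})
  (f_mono : {mono f : x y / x <= y})
  (not_convex : ~ value_group_convex f) :
  ~ exists iota : cut R -> cut F,
      [/\ injective iota, full_continuous iota & compatible_restriction f iota].
Proof.
move=> [iota [_ iota_cont iota_restr]].
apply: not_convex => x x_neq0 r1 r2 r1_neq0 r2_neq0 vle_r1x vle_xr2.
apply: NNPP => no_value.
apply: (continuous_compatible_absurd f_mono x_neq0 r1_neq0 r2_neq0 vle_r1x vle_xr2 _
          iota_cont iota_restr) => r r_neq0 xr rx.
by apply: no_value; exists r.
Qed.
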